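(* Let $n\ge 1$, let $C_u(v_1),\ldots,C_u(v_n)>0$, $C_d(v_1),\ldots,C_d(v_n)>0$ and $R_1,\ldots,R_n>0$ be sustainable, i.e. $R_i\le C_u(v_i)$ for all $i$, $\sum_{j\ne i}R_j\le C_d(v_i)$ for all $i$, and $(n-1)\sum_{i=1}^n R_i\le\sum_{i=1}^n C_u(v_i)$. Then the output $r_{i,j}$ of the algorithm described in the context satisfies the Downlink Capacity Constraint: for every $1\le k\le n$, $$\sum_{i\neq k}\sum_{j=1}^n r_{i,j} \leq C_d(v_k),$$ i.e. the aggregate rate of all sub-streams received by $v_k$ under the two-level broadcast trees described in the context is at most $C_d(v_k)$.
   Context: Sub-stream rate assigning algorithm. Input: $n$, uplink capacities $C_u(v_1),\ldots,C_u(v_n)$ and rates $R_1,\ldots,R_n$. Initialize $r_{i,j}:=0$ for all $1\le i,j\le n$ and $U_i := C_u(v_i)-R_i$ for $1\le i\le n$. Outer loop: for $i=1$ to $n$: set $R'_i := R_i$; inner loop: for $j=1$ to $n$: if $(n-2)R'_i > U_j$ then set $r_{i,j} := U_j/(n-2)$, else set $r_{i,j} := R'_i$; then set $U_j := U_j-(n-2)r_{i,j}$ and $R'_i := R'_i - r_{i,j}$; if $R'_i = 0$, exit the inner loop. Output all $r_{i,j}$. Interpretation: $r_{i,j}$ is the rate of sub-stream $s_{i,j}$ of site $v_i$'s data stream. Sub-stream $s_{i,i}$ is sent by $v_i$ directly to all other sites; for $j\ne i$, $s_{i,j}$ is sent from $v_i$ to $v_j$ and $v_j$ forwards it to the remaining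 $n-2$ sites. Thus every site other than $v_i$ receives each sub-stream $s_{i,j}$ exactly once, consuming $r_{i,j}$ of its downlink, and a site does not use its downlink for its own sub-streams. *)

From HB Require Import structures.
From mathcomp Require Import all_boot all_order all_algebra.
Set Implicit Arguments. Unset Strict Implicit. Unset Printing Implicit Defensive.
Import Order.TTheory GRing.Theory Num.Theory.
Local Open Scope ring_scope.

(* Sites v_1..v_n are indexed by 'I_n (0-based). Loops "for i = 1 to n"
   traverse enum 'I_n, i.e. 0, 1, ..., n-1 in increasing order. *)

Section Algo.
Variables (R : realFieldType) (n : nat).

Definition upd (f : 'I_n -> R) (j : 'I_n) (v : R) : 'I_n -> R :=
  fun k => if k == j then v else f k.

(* state of the inner loop: (U, R'_i, row r_{i,.}, exited?) *)
Definition inner_state := (('I_n -> R) * R * ('I_n -> R) * bool)%type.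

Definition inner_step (st : inner_state) (j : 'I_n) : inner_state :=
  let: (U, Rp, row, ex) := st in
  if ex then st else
  let c : R := n%:R - 2 in
  let rij := if c * Rp > U j then U j / c else Rp in
  let U' := upd U j (U j - c * rij) in
  let Rp' := Rp - rij in
  (U', Rp', upd row j rij, Rp' == 0).

Definition inner_loop (U : 'I_n -> R) (Ri : R) : ('I_n -> R) * ('I_n -> R) :=
  let: (U', _, row, _) := foldl inner_step (U, Ri, (fun _ => 0), false) (enum 'I_n) in
  (U', row).

Definition outer_step (Rr : 'I_n -> R)
    (st : ('I_n -> R) * ('I_n -> 'I_n -> R)) (i : 'I_n)
  : ('I_n -> R) * ('I_n -> 'I_n -> R) :=
  let: (U, r) := st in
  let: (U', row) := inner_loop U (Rr i) in
  (U', fun i' j => if i' == i then row j else r i' j).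

Definition substream_rates (Cu Rr : 'I_n -> R) : 'I_n -> 'I_n -> R :=
  (foldl (outer_step Rr) ((fun i => Cu i - Rr i), (fun _ _ => 0)) (enum 'I_n)).2.

End Algo.

(* While the residual budgets U_j and the residual demand R'_i are
   nonnegative, every assigned r_{i,j} lies in [0, R'_i] with
   (n-2) r_{i,j} <= U_j, so both stay nonnegative through both loops and the
   row of site i sums to at most R_i.  Site k thus receives at most the sum of
   the R_i over i <> k, which is at most C_d(v_k).  Only R_i <= C_u(v_i) (for
   U_j >= 0 initially) and the downlink part of sustainability are used. *)

From HB Require Import structures.
From mathcomp Require Import all_boot all_order all_algebra.
From mathcomp Require Import lra.
Import Order.TTheory GRing.Theory Num.Theory.
Local Open Scope ring_scope.

Lemma foldl_inv (T S : Type) (P : S -> Prop) (f : S -> T -> S) (s : seq T) x :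
  (forall y a, P y -> P (f y a)) -> P x -> P (foldl f x s).
Proof. by move=> fP; elim: s x => //= a s IHs x Px; apply/IHs/fP. Qed.

Section SubstreamRates.
Variables (R : realFieldType) (n : nat).

Definition inner_inv (Ri : R) (st : inner_state R n) : Prop :=
  let: (U, Rp, row, _) := st in
  [/\ forall j, 0 <= U j, 0 <= Rp, forall j, 0 <= row j &
      \sum_j row j + Rp <= Ri].

Lemma inner_step_inv (Ri : R) st j : inner_inv Ri st -> inner_inv Ri (inner_step st j).
Proof.
case: st => [[[U Rp] row] []] //= [U_ge0 Rp_ge0 row_ge0 row_sum].
set c : R := n%:R - 2; set rij := if _ then _ else _.
have [rij_ge0 rij_le_Rp U'_ge0] : [/\ 0 <= rij, rij <= Rp & 0 <= U j - c * rij].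
  rewrite /rij; case: ltP => [UltcR|cRleU]; last by rewrite subr_ge0.
  have c_gt0 : 0 < c by have := U_ge0 j; nra.
  split; first exact: divr_ge0 (U_ge0 j) (ltW c_gt0).
    by rewrite ler_pdivrMr // mulrC ltW.
  by rewrite mulrC divfK ?subrr ?gt_eqF.
split=> [k||k|]; rewrite ?/upd; first by case: eqP => // ->.
- lra.
- by case: eqP.
rewrite (bigD1 j) //= eqxx (eq_bigr row) => [|k /negbTE -> //].
by move: row_sum; rewrite (bigD1 j) //=; have := row_ge0 j; lra.
Qed.

Lemma inner_loop_inv (U : 'I_n -> R) (Ri : R) : (forall j, 0 <= U j) -> 0 <= Ri ->
  (forall j, 0 <= (inner_loop U Ri).1 j) /\ \sum_j (inner_loop U Ri).2 j <= Ri.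
Proof.
move=> U_ge0 Ri_ge0; rewrite /inner_loop.
have := @foldl_inv _ _ (inner_inv Ri) (@inner_step R n) (enum 'I_n)
  (U, Ri, fun _ => 0, false) (@inner_step_inv Ri).
case: foldl => [[[U' Rp] row] ex] /= [|U'_ge0 Rp_ge0 _ row_sum].
  by split=> //; rewrite big1 ?add0r.
by split=> //; apply: le_trans row_sum; rewrite lerDl.
Qed.

Lemma substream_rates_row_sum (Cu Rr : 'I_n -> R) :
  (forall i, 0 <= Rr i) -> (forall i, Rr i <= Cu i) ->
  forall i, \sum_j substream_rates Cu Rr i j <= Rr i.
Proof.
move=> Rr_ge0 Rr_le_Cu.
pose P (st : ('I_n -> R) * ('I_n -> 'I_n -> R)) :=
  (forall j, 0 <= st.1 j) /\ forall i, \sum_j st.2 i j <= Rr i.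
suff [] : P (foldl (outer_step Rr) ((fun i => Cu i - Rr i), (fun _ _ => 0)) (enum 'I_n)) by [].
apply: foldl_inv; last by split=> [j|i]; rewrite ?subr_ge0 ?big1.
move=> [U r] i [/= U_ge0 row_sum]; rewrite /outer_step.
have := @inner_loop_inv U (Rr i) U_ge0 (Rr_ge0 i).
case: inner_loop => U' row /= [U'_ge0 row'_sum]; split=> //= i'.
by case: (i' =P i) => [->|].
Qed.

End SubstreamRates.

Theorem propositionB6 (R : realFieldType) (n : nat) (Cu Cd Rr : 'I_n -> R) :
  (1 <= n)%N ->
  (forall i, 0 < Cu i) -> (forall i, 0 < Cd i) -> (forall i, 0 < Rr i) ->
  (forall i, Rr i <= Cu i) ->
  (forall i, \sum_(j | j != i) Rr j <= Cd i) ->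
  (n%:R - 1) * \sum_i Rr i <= \sum_i Cu i ->
  forall k : 'I_n,
    \sum_(i | i != k) \sum_j substream_rates Cu Rr i j <= Cd k.
Proof.
move=> _ _ _ Rr_gt0 Rr_le_Cu downlink _ k.
apply: le_trans (downlink k); apply: ler_sum => i _.
exact: substream_rates_row_sum (fun i => ltW (Rr_gt0 i)) Rr_le_Cu i.
Qed.
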